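(* Let $\mathcal{X}=\{1,\dots,n\}$, let $\pi$ be a strictly positive probability distribution on $\mathcal{X}$, let $P$ be a transition matrix with $\pi P=\pi$, and let $G$ be the Gibbs kernel induced by a partition $\mathcal{X}=\bigsqcup_{i=1}^k\mathcal{O}_i$. Then $\operatorname{Tr}(GP)=\operatorname{Tr}(PG)=\operatorname{Tr}(\overline{P})$, where $\overline{P}$ is the projection chain of $P$ on this partition.
   Context: The Gibbs kernel is $G(x,y)=\pi(y)/\pi(\mathcal{O}(x))$ if $y\in\mathcal{O}(x)$ and $0$ otherwise, where $\mathcal{O}(x)$ is the block containing $x$ and $\pi(\mathcal{O})=\sum_{z\in\mathcal{O}}\pi(z)$. The projection chain is the $k\times k$ matrix $\overline{P}(i,j)=\frac{1}{\pi(\mathcal{O}_i)}\sum_{x\in\mathcal{O}_i,\,y\in\mathcal{O}_j}\pi(x)P(x,y)$. *)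

From mathcomp Require Import all_boot all_order all_algebra.
Set Implicit Arguments. Unset Strict Implicit. Unset Printing Implicit Defensive.
Import Order.TTheory GRing.Theory Num.Theory.
Local Open Scope ring_scope.

(* State space X = 'I_n ; a partition into k blocks O_0,...,O_{k-1} is encoded
   by the block-label map  blk : 'I_n -> 'I_k  (O_i = blk^{-1}(i)); all blocks
   nonempty is the hypothesis that blk is surjective. *)

Definition block_mass (R : ringType) (n k : nat) (pi : 'I_n -> R)
  (blk : 'I_n -> 'I_k) (i : 'I_k) : R :=
  \sum_(z < n | blk z == i) pi z.

Definition gibbs_kernel (R : fieldType) (n k : nat) (pi : 'I_n -> R)
  (blk : 'I_n -> 'I_k) : 'M[R]_n :=
  \matrix_(x, y) (if blk y == blk x then pi y / block_mass pi blk (blk x) else 0).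

Definition projection_chain (R : fieldType) (n k : nat) (pi : 'I_n -> R)
  (blk : 'I_n -> 'I_k) (P : 'M[R]_n) : 'M[R]_k :=
  \matrix_(i, j) ((block_mass pi blk i)^-1 *
     \sum_(x < n | blk x == i) \sum_(y < n | blk y == j) pi x * P x y).

Definition stochastic (R : numDomainType) (n : nat) (P : 'M[R]_n) : Prop :=
  (forall x y, 0 <= P x y) /\ (forall x, \sum_(y < n) P x y = 1).

From mathcomp Require Import all_boot all_order all_algebra.
Import Order.TTheory GRing.Theory Num.Theory.
Local Open Scope ring_scope.

(* The first equality is the cyclicity of the trace.  For the second, the
   diagonal entry of P G at x is pi(O(x))^-1 * sum_{y in O(x)} pi(x) P(x,y);
   grouping the x by blocks gives the diagonal of the projection chain. *)

Section GibbsKernelTrace.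

Variables (R : fieldType) (n k : nat) (pi : 'I_n -> R) (blk : 'I_n -> 'I_k).

Lemma mulmx_gibbs_kernel_diag (P : 'M[R]_n) (x : 'I_n) :
  (P *m gibbs_kernel pi blk) x x =
  (block_mass pi blk (blk x))^-1 * \sum_(y < n | blk y == blk x) pi x * P x y.
Proof.
rewrite !mxE big_distrr /= (bigID (fun y => blk y == blk x)) /=.
rewrite [X in _ + X]big1 ?addr0 => [|y /negbTE yNx]; last first.
  by rewrite mxE eq_sym yNx mulr0.
apply: eq_bigr => y /eqP yx.
by rewrite mxE yx eqxx mulrCA mulrA mulrC.
Qed.

Lemma mxtrace_mulmx_gibbs_kernel (P : 'M[R]_n) :
  \tr (P *m gibbs_kernel pi blk) = \tr (projection_chain pi blk P).
Proof.
rewrite /mxtrace (partition_big blk xpredT) //=.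
apply: eq_bigr => i _; rewrite mxE big_distrr /=.
by apply: eq_bigr => x /eqP xi; rewrite mulmx_gibbs_kernel_diag xi.
Qed.

End GibbsKernelTrace.

Theorem lemma4p1 (R : realFieldType) (n k : nat)
  (pi : 'I_n -> R) (P : 'M[R]_n) (blk : 'I_n -> 'I_k)
  (hpos : forall x, 0 < pi x)
  (hsum : \sum_(x < n) pi x = 1)
  (hP : stochastic P)
  (hstat : forall y, \sum_(x < n) pi x * P x y = pi y)
  (hsurj : forall i : 'I_k, exists x, blk x = i) :
  \tr (gibbs_kernel pi blk *m P) = \tr (P *m gibbs_kernel pi blk) /\
  \tr (P *m gibbs_kernel pi blk) = \tr (projection_chain pi blk P).
Proof.
split; first exact: mxtrace_mulC.
exact: mxtrace_mulmx_gibbs_kernel.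
Qed.
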